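(* Let $V(\tilde{\Lambda})$ be a finite-dimensional irreducible $gl(m|n+1)$-module with highest weight $\tilde\Lambda$, equipped with its non-degenerate invariant sesquilinear form $\langle\,,\,\rangle$ (described in the context). Let $V_0(\tilde\Lambda)$ be its maximal $\mathbb{Z}$-graded component and put $W(\tilde{\Lambda}) = U(K_-)V_0(\tilde{\Lambda})$. If $0 \neq v_+ \in V(\tilde{\Lambda})$ is an $L$-maximal weight vector, then $\langle v_+, W(\tilde{\Lambda})\rangle \neq (0)$.
   Context: Work over $\mathbb{C}$. Let $N=m+n+1$ and set the parity $(p)=0$ for $1\le p\le m$ and $(p)=1$ for $m<p\le N$. The Lie superalgebra $\hat L=gl(m|n+1)$ has homogeneous basis $E_{pq}$ ($1\le p,q\le N$) of parity $(p)+(q)$ with graded bracket $[E_{pq},E_{rs}]=\delta_{qr}E_{ps}-(-1)^{((p)+(q))((r)+(s))}\delta_{ps}E_{rq}$. It has the $\mathbb{Z}$-grading $\hat L=\hat L_-\oplus\hat L_0\oplus\hat L_+$ with $\hat L_0=gl(m)\oplus gl(n+1)$ (the even part), $\hat L_+=\mathrm{span}\{E_{pq}: p\le m<q\}$, $\hat L_-=\mathrm{span}\{E_{qp}: p\le m<q\}$. Let $L=gl(m|n)\oplus gl(1)$ be the subalgebra spanned by $E_{pq}$ ($p,q\le m+n$) and $E_{NN}$, with induced grading $L=L_-\oplus L_0\oplus L_+$, $L_0=gl(m)\oplus gl(n)\oplus gl(1)$, $L_\pm=\hat L_\pm\cap L$; put $K_+=\mathrm{span}\{E_{iN}\}_{i=1}^m$,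 $K_-=\mathrm{span}\{E_{Ni}\}_{i=1}^m$, so $\hat L_\pm=L_\pm\oplus K_\pm$. $V(\tilde\Lambda)$ admits a $\mathbb{Z}$-gradation $V(\tilde\Lambda)=\bigoplus_{k=-d}^0V_k(\tilde\Lambda)$ whose top component $V_0(\tilde\Lambda)$ (the maximal $\mathbb{Z}$-graded component) is the irreducible $\hat L_0$-module generated by the highest weight vector. $V(\tilde\Lambda)$ carries a (unique) non-degenerate sesquilinear form $\langle\,,\,\rangle$ with $\langle v,w\rangle=\overline{\langle w,v\rangle}$ and $\langle av,w\rangle=\langle v,a^\dagger w\rangle$ for all $a\in\hat L$, where $\dagger$ is the conjugation with $(E_{pq})^\dagger=E_{qp}$. An $L$-maximal weight vector is a weight vector (for the Cartan subalgebra spanned by the $E_{pp}$) annihilated by all $E_{pq}$ with $p<q\le m+n$. *)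

From HB Require Import structures.
From mathcomp Require Import all_boot all_order all_algebra.
Set Implicit Arguments. Unset Strict Implicit. Unset Printing Implicit Defensive.
Import Order.TTheory GRing.Theory Num.Theory.
Local Open Scope ring_scope.

(* Indices 1..N of the paper are the ordinals 0..N-1 of 'I_N, N = m+n+1.
   A finite-dimensional gl(m|n+1)-module is modelled as C^d (column vectors)
   with rho p q the matrix by which E_{pq} acts. *)
Section Defs.
Variables (C : numClosedFieldType) (m n d : nat).
Local Notation N := (m + n).+1.

Definition par (p : 'I_N) : bool := (m <= p)%N.

Definition sgn (p q r s : 'I_N) : C :=
  (-1) ^+ ((par p (+) par q) && (par r (+) par s)).

Definition is_rep (rho : 'I_N -> 'I_N -> 'M[C]_d) : Prop :=
  forall p q r s : 'I_N,
    rho p q *m rho r s - sgn p q r s *: (rho r s *m rho p q) =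
    (q == r)%:R *: rho p s - (sgn p q r s * (p == s)%:R) *: rho r q.

Definition invariant_subspace (rho : 'I_N -> 'I_N -> 'M[C]_d)
    (P : 'cV[C]_d -> Prop) : Prop :=
  [/\ P 0, (forall u v, P u -> P v -> P (u + v)),
      (forall (a : C) u, P u -> P (a *: u)) &
      (forall p q u, P u -> P (rho p q *m u))].

Definition irreducible_rep (rho : 'I_N -> 'I_N -> 'M[C]_d) : Prop :=
  (0 < d)%N /\
  forall P, invariant_subspace rho P -> (exists2 v, v != 0 & P v) ->
    forall v, P v.

Definition highest_weight_vector (rho : 'I_N -> 'I_N -> 'M[C]_d)
    (Lam : 'I_N -> C) (v : 'cV[C]_d) : Prop :=
  [/\ v != 0, (forall p, rho p p *m v = Lam p *: v) &
      (forall p q : 'I_N, (p < q)%N -> rho p q *m v = 0)].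

(* Convention: linear in the second argument (antilinear in the first
   follows from conjugate symmetry). *)
Definition contravariant_form (rho : 'I_N -> 'I_N -> 'M[C]_d)
    (f : 'cV[C]_d -> 'cV[C]_d -> C) : Prop :=
  [/\ (forall u v w (a : C), f u (a *: v + w) = a * f u v + f u w),
      (forall u v, f u v = (f v u)^*),
      (forall u, (forall v, f u v = 0) -> u = 0) &
      (forall p q u v, f (rho p q *m u) v = f u (rho q p *m v))].

Definition L_maximal_weight_vector (rho : 'I_N -> 'I_N -> 'M[C]_d)
    (v : 'cV[C]_d) : Prop :=
  (exists mu : 'I_N -> C, forall p, rho p p *m v = mu p *: v) /\
  (forall p q : 'I_N, (p < q)%N -> (q < m + n)%N -> rho p q *m v = 0).

(* V_0 = U(hat L_0) v_Lam : smallest subspace containing the highest weight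
   vector and stable under the even part hat L_0 = span{E_pq : (p)=(q)} *)
Inductive in_V0 (rho : 'I_N -> 'I_N -> 'M[C]_d) (vL : 'cV[C]_d)
    : 'cV[C]_d -> Prop :=
  | V0_hw : in_V0 rho vL vL
  | V0_add u v : in_V0 rho vL u -> in_V0 rho vL v -> in_V0 rho vL (u + v)
  | V0_scale (a : C) u : in_V0 rho vL u -> in_V0 rho vL (a *: u)
  | V0_act (p q : 'I_N) u : par p = par q -> in_V0 rho vL u ->
      in_V0 rho vL (rho p q *m u).

(* W = U(K_-) V_0, K_- = span{E_{N i} : i <= m} (1-based) *)
Inductive in_W (rho : 'I_N -> 'I_N -> 'M[C]_d) (vL : 'cV[C]_d)
    : 'cV[C]_d -> Prop :=
  | W_V0 u : in_V0 rho vL u -> in_W rho vL u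
  | W_add u v : in_W rho vL u -> in_W rho vL v -> in_W rho vL (u + v)
  | W_scale (a : C) u : in_W rho vL u -> in_W rho vL (a *: u)
  | W_act (i : 'I_N) u : (i < m)%N -> in_W rho vL u ->
      in_W rho vL (rho ord_max i *m u).

End Defs.

(* The subspace B W, where W = U(K_-) V_0 and B is the lower Borel subalgebra
   of L, is invariant under all of gl(m|n+1): an operator E_pq outside
   B + K_- either raises inside hat L_0, and so preserves V_0, or lies in
   hat L_+, and so kills V_0, or is an E_{N q} with q > m, which lies in L.
   By irreducibility B W is the whole module.  If v_+ were orthogonal to W, it
   would be orthogonal to B W as well, since the adjoint of an element of B
   maps the L-maximal vector v_+ to a multiple of itself; non-degeneracy of the
   form then forces v_+ = 0. *)
From Stdlib Require Import Classical.
From HB Require Import structures.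
From mathcomp Require Import all_boot all_order all_algebra.
Set Implicit Arguments. Unset Strict Implicit. Unset Printing Implicit Defensive.
Import Order.TTheory GRing.Theory Num.Theory.
Local Open Scope ring_scope.

Section HighestWeightModule.
Variables (C : numClosedFieldType) (m n d : nat).
Local Notation I := 'I_(m + n).+1.
Variables (rho : I -> I -> 'M[C]_d) (Lam : I -> C) (vL : 'cV[C]_d).
Hypothesis rho_rep : is_rep rho.
Hypothesis vL_hw : highest_weight_vector rho Lam vL.

Lemma rho_supercomm (p q r s : I) (u : 'cV[C]_d) :
  rho p q *m (rho r s *m u) = sgn C p q r s *: (rho r s *m (rho p q *m u))
    + ((q == r)%:R *: (rho p s *m u)
       - (sgn C p q r s * (p == s)%:R) *: (rho r q *m u)).
Proof.
move/eqP: (rho_rep p q r s); rewrite subr_eq => /eqP E.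
by rewrite !mulmxA E mulmxDl mulmxBl -!scalemxAl addrC.
Qed.

Lemma V0_odd_raise_eq0 u : in_V0 rho vL u ->
  forall p q : I, (p < m)%N -> (m <= q)%N -> rho p q *m u = 0.
Proof.
elim=> [|u1 v1 _ IHu _ IHv|a u1 _ IHu|a b u1 par_ab _ IHu] p q lt_pm le_mq.
- by case: vL_hw => _ _ ->//; apply: leq_trans le_mq.
- by rewrite mulmxDr IHu // IHv // addr0.
- by rewrite -scalemxAr IHu // scaler0.
rewrite rho_supercomm IHu // mulmx0 scaler0 add0r.
have first_eq0 : (q == a)%:R *: (rho p b *m u1) = 0.
  have [eq_qa|] := eqVneq q a; last by rewrite scale0r.
  by rewrite IHu ?scaler0 //; move: par_ab; rewrite /par -eq_qa le_mq => <-.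
have second_eq0 : (sgn C p q a b * (p == b)%:R) *: (rho a q *m u1) = 0.
  have [eq_pb|] := eqVneq p b; last by rewrite mulr0 scale0r.
  rewrite IHu ?scaler0 //; move: par_ab.
  by rewrite /par -eq_pb (leqNgt m p) lt_pm /= => /negbT; rewrite -ltnNge.
by rewrite first_eq0 second_eq0 subr0.
Qed.

(* E_ab lies in the lower Borel subalgebra of L = gl(m|n) + gl(1); the
   disjunct a == b is needed only for E_NN. *)
Definition lower_borel (a b : I) : bool :=
  (b <= a)%N && ((a < m + n)%N || (a == b)).

Inductive in_BW : 'cV[C]_d -> Prop :=
  | BW_W u : in_W rho vL u -> in_BW u
  | BW_add u v : in_BW u -> in_BW v -> in_BW (u + v)
  | BW_scale (c : C) u : in_BW u -> in_BW (c *: u)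
  | BW_act a b u : lower_borel a b -> in_BW u -> in_BW (rho a b *m u).

Lemma BW_V0 u : in_V0 rho vL u -> in_BW u.
Proof. by move=> V0u; apply/BW_W/W_V0. Qed.

Lemma BW_hw : in_BW vL.
Proof. exact/BW_V0/V0_hw. Qed.

Lemma BW0 : in_BW 0.
Proof. by rewrite -(scale0r vL); apply: BW_scale BW_hw. Qed.

Lemma BW_scale_delta (c : C) (b : bool) u :
  (b -> in_BW u) -> in_BW ((c * b%:R) *: u).
Proof.
case: b => [BWu|_]; first by rewrite mulr1; apply: BW_scale; apply: BWu.
by rewrite mulr0 scale0r; apply: BW0.
Qed.

Lemma BW_supercomm_expansion (c c' : C) (b b' : bool) x y z :
  in_BW x -> (b -> in_BW y) -> (b' -> in_BW z) ->
  in_BW (c *: x + (b%:R *: y - (c' * b'%:R) *: z)).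
Proof.
move=> BWx BWy BWz; apply: BW_add; first exact: BW_scale.
apply: BW_add; first by rewrite -[b%:R]mul1r; apply: BW_scale_delta.
by rewrite -scaleNr -mulNr; apply: BW_scale_delta.
Qed.

Lemma BW_K_minus u : in_BW u ->
  forall i : I, (i < m)%N -> in_BW (rho ord_max i *m u).
Proof.
elim=> [u1 Wu|u1 v1 _ IHu _ IHv|c u1 _ IHu|a b u1 Bab _ IHu] i lt_im.
- exact/BW_W/W_act.
- by rewrite mulmxDr; apply: BW_add; [apply: IHu|apply: IHv].
- by rewrite -scalemxAr; apply: BW_scale; apply: IHu.
case/andP: (Bab) => le_ba _.
rewrite rho_supercomm; apply: BW_supercomm_expansion.
- by apply: BW_act => //; apply: IHu.
- by move=> /eqP eq_ia; apply: IHu; apply: leq_ltn_trans le_ba _; rewrite -eq_ia.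
move=> /eqP eq_Nb; suff -> : a = ord_max by apply: IHu.
by apply/val_inj/eqP; rewrite eqn_leq -ltnS ltn_ord; move: le_ba; rewrite -eq_Nb.
Qed.

Lemma BW_rho_V0 u : in_V0 rho vL u -> forall a b : I, in_BW (rho a b *m u).
Proof.
move=> V0u a b; have [par_ab|] := eqVneq (par a) (par b).
  exact/BW_V0/V0_act.
rewrite /par; case: (leqP m a) => [le_ma|lt_am]; case: (leqP m b) => // + _.
  move=> lt_bm; have [->|ne_aN] := eqVneq a ord_max; first exact/BW_W/W_act/W_V0.
  apply: BW_act; last exact: BW_V0.
  rewrite /lower_borel (ltnW (leq_trans lt_bm le_ma)) /=.
  have : (a < (m + n).+1)%N := ltn_ord a.
  rewrite ltnS leq_eqVlt => /orP [/eqP eq_aN|->] //.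
  by case/eqP: ne_aN; apply/val_inj.
by move=> le_mb; rewrite V0_odd_raise_eq0 //; apply: BW0.
Qed.

Lemma BW_rho_W u : in_W rho vL u -> forall a b : I, in_BW (rho a b *m u).
Proof.
elim=> [u1 V0u|u1 v1 _ IHu _ IHv|c u1 _ IHu|i u1 lt_im Wu IHu] a b.
- exact: BW_rho_V0.
- by rewrite mulmxDr; apply: BW_add; [apply: IHu|apply: IHv].
- by rewrite -scalemxAr; apply: BW_scale; apply: IHu.
by rewrite rho_supercomm; apply: BW_supercomm_expansion => [|_|_]; [apply: BW_K_minus|..].
Qed.

Lemma BW_invariant : invariant_subspace rho in_BW.
Proof.
split; [exact: BW0 | exact: BW_add | exact: BW_scale |].
move=> a b u BWu; elim: BWu a b => [u1 Wu|u1 v1 _ IHu _ IHv|c u1 _ IHu|e f u1 Bef _ IHu] a b.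
- exact: BW_rho_W.
- by rewrite mulmxDr; apply: BW_add.
- by rewrite -scalemxAr; apply: BW_scale.
by rewrite rho_supercomm; apply: BW_supercomm_expansion => [|_|_]; [apply: BW_act|..].
Qed.

Section ContravariantForm.
Variable form : 'cV[C]_d -> 'cV[C]_d -> C.
Hypothesis form_contra : contravariant_form rho form.

Lemma form0r u : form u 0 = 0.
Proof.
case: form_contra => linear _ _ _.
have := linear u 0 0 1; rewrite scale1r addr0 mul1r => double.
by apply: (addrI (form u 0)); rewrite addr0 -double.
Qed.

Lemma form0l v : form 0 v = 0.
Proof. by case: form_contra => _ sym _ _; rewrite sym form0r conjC0. Qed.

Lemma form_scalel (c : C) u v : form (c *: u) v = c^* * form u v.
Proof.
case: form_contra => linear sym _ _.
by rewrite sym -[c *: u]addr0 linear form0r addr0 rmorphM /= -sym.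
Qed.

Lemma form_orthogonal_BW vp : L_maximal_weight_vector rho vp ->
  (forall w, in_W rho vL w -> form vp w = 0) ->
  forall v, in_BW v -> form vp v = 0.
Proof.
case: form_contra => linear _ _ adj [[mu vp_weight] vp_Lmax] vp_perp_W v.
elim=> [u Wu|u v' _ IHu _ IHv|c u _ IHu|a b u Bab _ IHu].
- exact: vp_perp_W.
- by rewrite -[u]scale1r linear IHu IHv mulr0 addr0.
- by rewrite -[c *: u]addr0 linear IHu form0r mulr0 addr0.
rewrite -adj; case/andP: Bab; rewrite leq_eqVlt => /orP [/eqP/val_inj ->|lt_ba].
  by rewrite vp_weight form_scalel IHu mulr0.
by case/orP => [lt_a|/eqP eq_ab]; [rewrite vp_Lmax // form0l|move: lt_ba; rewrite eq_ab ltnn].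
Qed.

End ContravariantForm.

End HighestWeightModule.

Theorem lemma1 (C : numClosedFieldType) (m n d : nat)
  (rho : 'I_(m + n).+1 -> 'I_(m + n).+1 -> 'M[C]_d)
  (Lam : 'I_(m + n).+1 -> C) (vL : 'cV[C]_d)
  (form : 'cV[C]_d -> 'cV[C]_d -> C) (vp : 'cV[C]_d) :
  is_rep rho -> irreducible_rep rho -> highest_weight_vector rho Lam vL ->
  contravariant_form rho form ->
  vp != 0 -> L_maximal_weight_vector rho vp ->
  exists2 w, in_W rho vL w & form vp w != 0.
Proof.
move=> rep [_ irr] hw contra vp_neq0 vp_Lmax; apply: NNPP => no_witness.
have vp_perp_W w : in_W rho vL w -> form vp w = 0.
  by move=> Ww; have [//|ne0] := eqVneq (form vp w) 0; case: no_witness; exists w.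
have BW_all v : in_BW rho vL v.
  by apply: irr v; [apply: BW_invariant rep hw | exists vL; [case: hw|apply: BW_hw]].
case: (contra) => _ _ nondeg _; case/eqP: vp_neq0; apply: nondeg => v.
exact: (form_orthogonal_BW contra vp_Lmax vp_perp_W (BW_all v)).
Qed.
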